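(* Let $\alpha,\beta,\gamma,\Delta\in\mathbb{C}$ with $(\Delta,\beta)\neq(0,0)$. Consider extensions of conformal $\mathrm{HV}$-modules $$0\to\mathbb{C}c_\gamma\to E\to V(\alpha,\beta,\Delta)\to0,$$ realized as $E=\mathbb{C}c_\gamma\oplus\mathbb{C}[\partial]v_\Delta$ with $\mathbb{C}c_\gamma$ a submodule and $L_\lambda v_\Delta=(\partial+\alpha+\Delta\lambda)v_\Delta+f(\lambda)c_\gamma$, $N_\lambda v_\Delta=\beta v_\Delta+k(\lambda)c_\gamma$, $f,k\in\mathbb{C}[\lambda]$. Nontrivial extensions of this form exist if and only if $\alpha+\gamma=0$, $\beta=0$ and $\Delta\in\{1,2\}$. They are given, up to equivalence, by: (i) $k(\lambda)=k_1\lambda$, $f(\lambda)=f_2\lambda^2$, for $\Delta=1$ and $(k_1,f_2)\neq(0,0)$; (ii) $k=0$, $f(\lambda)=f_3\lambda^3$, for $\Delta=2$ and $f_3\neq0$. Furthermore, the trivial cocycles are exactly the pairs $(f,k)=(a(\alpha+\gamma+\Delta\lambda),a\beta)$, $a\in\mathbb{C}$.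
   Context: A conformal module over a Lie conformal algebra $R$ is a $\mathbb{C}[\partial]$-module $V$ with $a\mapsto a_\lambda\in\mathrm{End}_{\mathbb{C}}(V)\otimes\mathbb{C}[\lambda]$ satisfying $[a_\lambda,b_\mu]=[a_\lambda b]_{\lambda+\mu}$ and $(\partial a)_\lambda=[\partial,a_\lambda]=-\lambda a_\lambda$. The Heisenberg–Virasoro conformal algebra $\mathrm{HV}$ is the free $\mathbb{C}[\partial]$-module with basis $L,N$ and $\lambda$-brackets $[L_\lambda L]=(\partial+2\lambda)L$, $[L_\lambda N]=(\partial+\lambda)N$, $[N_\lambda L]=\lambda N$, $[N_\lambda N]=0$. $V(\alpha,\beta,\Delta)=\mathbb{C}[\partial]v_\Delta$ with $L_\lambda v_\Delta=(\partial+\alpha+\Delta\lambda)v_\Delta$, $N_\lambda v_\Delta=\beta v_\Delta$. $\mathbb{C}c_\gamma$ is the one-dimensional module with $\partial c_\gamma=\gamma c_\gamma$ and $L_\lambda c_\gamma=N_\lambda c_\gamma=0$. An extension of $W$ by $V$ is an exact sequence $0\to V\to E\to W\to0$ of conformal modules; equivalence via a module map of middle terms compatible with identities; trivial means equivalent to the direct sum. *)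

(* The field of complex numbers is modelled as R[i] = complex R
   for an arbitrary real-number structure R : realType (mathcomp-analysis). *)
From HB Require Import structures.
From mathcomp Require Import all_boot all_order all_algebra.
From mathcomp Require Import reals.
From mathcomp Require Import complex.
Set Implicit Arguments. Unset Strict Implicit. Unset Printing Implicit Defensive.
Import Order.TTheory GRing.Theory Num.Theory.
Local Open Scope ring_scope.

Section HV.
Variable C : numClosedFieldType.

(* Generic notion of a conformal module over the Heisenberg–Virasoro conformal
   algebra HV, on a C-vector space E, with the action of the generator
   ∂ given by d and the λ-actions L_λ, N_λ given, for each value λ ∈ C,
   by the maps L λ, N λ : E -> E.  Since C is infinite, polynomial identities
   in λ, μ are equivalent to identities for all values λ, μ ∈ C.
   The condition "a_λ v ∈ V[λ]" is the polynomiality clause. *)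
Definition lin_map (E : lmodType C) (g : E -> E) : Prop :=
  forall (a : C) (x y : E), g (a *: x + y) = a *: g x + g y.

Definition poly_in_lambda (E : lmodType C) (A : C -> E -> E) : Prop :=
  forall x : E, exists (n : nat) (e : nat -> E),
    forall l : C, A l x = \sum_(i < n) (l ^+ i) *: e i.

Definition HV_conformal_module (E : lmodType C) (d : E -> E)
    (L N : C -> E -> E) : Prop :=
  [/\ lin_map d /\ (forall l, lin_map (L l)) /\ (forall l, lin_map (N l)),
      poly_in_lambda L /\ poly_in_lambda N,
      (* (∂a)_λ = [∂, a_λ] = -λ a_λ *)
      (forall l x, d (L l x) - L l (d x) = - l *: L l x) /\
      (forall l x, d (N l x) - N l (d x) = - l *: N l x) &
      (* [a_λ, b_μ] = [a_λ b]_{λ+μ} *)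
      [/\ forall l m x, L l (L m x) - L m (L l x) = (l - m) *: L (l + m) x,
          forall l m x, L l (N m x) - N m (L l x) = (- m) *: N (l + m) x,
          forall l m x, N l (L m x) - L m (N l x) = l *: N (l + m) x &
          forall l m x, N l (N m x) - N m (N l x) = 0]].

(* The candidate middle term E = C c_γ ⊕ C[∂] v_Δ: the element (c, p)
   stands for c·c_γ + p(∂) v_Δ. *)
Local Notation Ecar := (C^o * {poly C})%type.

Definition Ed (g : C) (x : Ecar) : Ecar := (g * x.1, 'X * x.2).

(* L_λ (p(∂) v) = p(∂+λ) ((∂ + α + Δλ) v + f(λ) c),  L_λ c = 0,
   using ∂ c = γ c. *)
Definition EL (a g D : C) (f : {poly C}) (l : C) (x : Ecar) : Ecar :=
  (x.2.[g + l] * f.[l], (x.2 \Po ('X + l%:P)) * ('X + (a + D * l)%:P)).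

(* N_λ (p(∂) v) = p(∂+λ) (β v + k(λ) c),  N_λ c = 0. *)
Definition EN (b g : C) (k : {poly C}) (l : C) (x : Ecar) : Ecar :=
  (x.2.[g + l] * k.[l], (x.2 \Po ('X + l%:P)) * b%:P).

Definition HVext (a b g D : C) (f k : {poly C}) : Prop :=
  @HV_conformal_module Ecar (Ed g) (EL a g D f) (EN b g k).

Definition HVext_equiv (a b g D : C) (f k f' k' : {poly C}) : Prop :=
  exists phi : Ecar -> Ecar,
    [/\ lin_map phi /\ (forall x, phi (Ed g x) = Ed g (phi x)),
        forall l x, phi (EL a g D f l x) = EL a g D f' l (phi x),
        forall l x, phi (EN b g k l x) = EN b g k' l (phi x),
        (forall c : C, phi (c, 0) = (c, 0)) &
        (forall x, (phi x).2 = x.2)].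

Definition HVext_trivial (a b g D : C) (f k : {poly C}) : Prop :=
  HVext_equiv a b g D f k 0 0.

End HV.

From HB Require Import structures.
From mathcomp Require Import all_boot all_order all_algebra.
From mathcomp Require Import reals complex.
From mathcomp Require Import zify ring.
Import Order.TTheory GRing.Theory Num.Theory.
Local Open Scope ring_scope.
Set Implicit Arguments. Unset Strict Implicit. Unset Printing Implicit Defensive.

(* The extension given by (f, k) is a conformal module exactly when the
   c_γ-components of the λ-bracket identities vanish on v_Δ, i.e. when (f, k)
   solves three functional equations (cocycleLL, cocycleLN, cocycleNN); the
   ∂-compatibility and polynomiality in λ hold automatically.  An equivalence of
   extensions is necessarily a shear (u, p) ↦ (u + c p(γ), p), which changes
   (f, k) by the coboundary c (α + γ + Δλ, β).
   If β ≠ 0 the NN-equation makes k constant, and then the LN-equation makes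
   (f, k) a coboundary.  If β = 0 the LN-equation forces k = κλ, with κ ≠ 0 only
   when α + γ = 0 and Δ = 1.  For α + γ ≠ 0 the LL-equation at μ = 0 makes f a
   coboundary; for α + γ = 0 it is homogeneous, so it holds monomial by monomial,
   and λ^i survives only for i = 1 (a coboundary), i = 2 with Δ = 1, or i = 3
   with Δ = 2. *)

Section PolyOnNonzero.
Variable R : numDomainType.

Lemma poly_eq0_on_nonzero (p : {poly R}) :
  (forall x : R, x != 0 -> p.[x] = 0) -> p = 0.
Proof.
move=> p0; apply: (@roots_geq_poly_eq0 _ p [seq i.+1%:R | i <- iota 0 (size p)]).
- by apply/allP => _ /mapP [i _ ->]; apply/rootP/p0; rewrite pnatr_eq0.
- by rewrite map_inj_uniq ?iota_uniq // => i j /eqP; rewrite eqr_nat => /eqP [].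
- by rewrite size_map size_iota.
Qed.

Lemma poly_eq_on_nonzero (p q : {poly R}) :
  (forall x : R, x != 0 -> p.[x] = q.[x]) -> p = q.
Proof.
move=> pq; apply/eqP; rewrite -subr_eq0; apply/eqP/poly_eq0_on_nonzero => x x0.
by rewrite hornerD hornerN pq // subrr.
Qed.

End PolyOnNonzero.

Section Shift.
Variable R : comNzRingType.
Implicit Types p : {poly R}.

Lemma horner_comp_shift p (m y : R) : (p \Po ('X + m%:P)).[y] = p.[y + m].
Proof. by rewrite horner_comp hornerD hornerX hornerC. Qed.

Lemma comp_shiftA p (l m : R) :
  p \Po ('X + m%:P) \Po ('X + l%:P) = p \Po ('X + (l + m)%:P).
Proof. by rewrite -comp_polyA comp_polyD comp_polyX comp_polyC -addrA -polyCD. Qed.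

End Shift.

Lemma coef_Xadd1_exp (R : nzRingType) n j : (('X + 1 : {poly R}) ^+ n)`_j = 'C(n, j)%:R.
Proof.
elim: n j => [|n IHn] j; first by rewrite expr0 coef1 bin0n.
rewrite exprSr mulrDr mulr1 coefD coefMX !IHn.
by case: j => [|j] /=; rewrite ?bin0 ?add0r // binS natrD addrC.
Qed.

Lemma poly_X (R : nzRingType) (p : {poly R}) :
  (forall i, p`_i != 0 -> i = 1%N) -> p = p`_1 *: 'X.
Proof.
move=> supp; apply/polyP => i; rewrite coefZ coefX.
have [-> | i1] := eqVneq i 1%N; first by rewrite mulr1.
by rewrite mulr0; apply/eqP; apply: contraT => /supp /eqP; rewrite (negbTE i1).
Qed.

Lemma poly_X_Xn (R : nzRingType) (p : {poly R}) n : n != 1%N ->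
  (forall i, p`_i != 0 -> i = 1%N \/ i = n) -> p = p`_1 *: 'X + p`_n *: 'X^n.
Proof.
move=> n1 supp; apply/polyP => i; rewrite coefD !coefZ coefX coefXn.
have [-> | i1] := eqVneq i 1%N; first by rewrite eq_sym (negbTE n1) mulr1 mulr0 addr0.
have [-> | in_] := eqVneq i n; first by rewrite mulr0 mulr1 add0r.
rewrite !mulr0 addr0; apply/eqP; apply: contraT => /supp [] /eqP.
  by rewrite (negbTE i1).
by rewrite (negbTE in_).
Qed.

Lemma scale_regularE (R : pzSemiRingType) (c u : R) : c *: (u : R^o) = c * u.
Proof. by []. Qed.

Section LinearMaps.
Variables (R : pzRingType) (V W : lmodType R) (h : V -> W).
Hypothesis h_linear : linear h.

Lemma linear_map0 : h 0 = 0.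
Proof.
by apply: (addrI (h 0)); rewrite addr0 -{1}(scale1r (h 0)) -h_linear scaler0 addr0.
Qed.

Lemma linear_mapD x y : h (x + y) = h x + h y.
Proof. by rewrite -{1}(scale1r x) h_linear scale1r. Qed.

Lemma linear_mapZ c x : h (c *: x) = c *: h x.
Proof. by rewrite -[c *: x]addr0 h_linear linear_map0 addr0. Qed.

End LinearMaps.

Section PolynomialFamilies.
Variable R : comNzRingType.

(* [poly_in_lambda A] is convertible to [forall x, polyfun (fun l => A l x)]. *)
Definition polyfun (V : lmodType R) (F : R -> V) : Prop :=
  exists (n : nat) (e : nat -> V), forall l, F l = \sum_(i < n) l ^+ i *: e i.

Implicit Types V W : lmodType R.

Lemma eq_polyfun V (F G : R -> V) : F =1 G -> polyfun F -> polyfun G.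
Proof. by move=> FG [n [e Fe]]; exists n, e => l; rewrite -FG. Qed.

Lemma polyfun_cst V (v : V) : polyfun (fun _ => v).
Proof. by exists 1%N, (fun _ => v) => l; rewrite big_ord1 expr0 scale1r. Qed.

Lemma polyfunD V (F G : R -> V) : polyfun F -> polyfun G -> polyfun (fun l => F l + G l).
Proof.
move=> [n1 [e1 Fe]] [n2 [e2 Ge]].
pose ext n (e : nat -> V) i := if (i < n)%N then e i else 0.
exists (n1 + n2)%N, (fun i => ext n1 e1 i + ext n2 e2 i) => l.
have widen n (e : nat -> V) : (n <= n1 + n2)%N ->
    \sum_(i < n) l ^+ i *: e i = \sum_(i < n1 + n2) l ^+ i *: ext n e i.
  move=> le_n; rewrite (big_ord_widen _ (fun i => l ^+ i *: e i) le_n) big_mkcond.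
  by apply: eq_bigr => i _; rewrite /ext; case: ifP; rewrite ?scaler0.
rewrite Fe Ge (widen n1) ?leq_addr // (widen n2) ?leq_addl // -big_split.
by apply: eq_bigr => i _; rewrite scalerDr.
Qed.

Lemma polyfunZ V (F : R -> V) : polyfun F -> polyfun (fun l => l *: F l).
Proof.
move=> [n [e Fe]]; exists n.+1, (fun i => if i is j.+1 then e j else 0) => l.
rewrite big_ord_recl scaler0 add0r Fe scaler_sumr.
by apply: eq_bigr => i _; rewrite scalerA exprS.
Qed.

Lemma polyfun_linear V W (h : V -> W) (F : R -> V) : linear h -> polyfun F -> polyfun (h \o F).
Proof.
move=> hlin [n [e Fe]].
exists n, (h \o e) => l; rewrite /= Fe.
elim: n {Fe} => [|n IHn]; first by rewrite !big_ord0 (linear_map0 hlin).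
by rewrite !big_ord_recr /= addrC hlin IHn addrC.
Qed.

Lemma polyfun_horner (q : {poly R}) : polyfun (V := R^o) (horner q).
Proof.
exists (size q), (fun i => q`_i) => l; rewrite horner_coef.
by apply: eq_bigr => i _; rewrite mulrC.
Qed.

Lemma mulr_is_linear (A : lalgType R) (q : A) : linear (fun r : A => r * q).
Proof. by move=> c u v; rewrite mulrDl scalerAl. Qed.

Lemma polyfun_comp_shift (p : {poly R}) : polyfun (fun l => p \Po ('X + l%:P)).
Proof.
elim/poly_ind: p => [|p c IHp].
  by apply: (eq_polyfun _ (polyfun_cst 0)) => l; rewrite comp_poly0.
apply: (eq_polyfun _ (polyfunD (polyfunD (polyfun_linear (mulr_is_linear 'X) IHp)
  (polyfunZ IHp)) (polyfun_cst c%:P))) => l /=.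
by rewrite comp_poly_MXaddC mulrDr -mul_polyC [l%:P * _]mulrC.
Qed.

Lemma polyfun_pair V W (F : R -> V) (G : R -> W) :
  polyfun F -> polyfun G -> polyfun (V := (V * W)%type) (fun l => (F l, G l)).
Proof.
move=> pF pG.
have inl_linear : linear (fun v : V => (v, 0 : W)).
  by move=> k u v; apply: injective_projections => /=; rewrite ?scaler0 ?addr0.
have inr_linear : linear (fun w : W => (0 : V, w)).
  by move=> k u v; apply: injective_projections => /=; rewrite ?scaler0 ?addr0.
apply: (eq_polyfun _ (polyfunD (polyfun_linear inl_linear pF)
  (polyfun_linear inr_linear pG))) => l /=.
by apply: injective_projections => /=; rewrite ?addr0 ?add0r.
Qed.

End PolynomialFamilies.

Section HVExtensions.
Variables (C : numClosedFieldType) (a b g D : C).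
Local Notation Ecar := (C^o * {poly C})%type.
Implicit Types (f k : {poly C}) (l m : C) (x : Ecar).

Definition cocycleLL f l m :=
  (a + g + l + D * m) * f.[l] - (a + g + m + D * l) * f.[m] - (l - m) * f.[l + m].
Definition cocycleLN f k l m :=
  b * f.[l] - (a + g + m + D * l) * k.[m] + m * k.[l + m].
Definition cocycleNN k l m := b * k.[l] - b * k.[m].

Ltac bracket_components cocycle l m :=
  case=> u p; apply: injective_projections => /=;
  [ rewrite !hornerM !horner_comp_shift !(hornerD, hornerX, hornerC);
    rewrite ?scale_regularE;
    rewrite ?[g + m + l]addrAC ?[g + (l + m)]addrA /cocycle ?(addrC m l); ring
  | rewrite !comp_polyM !comp_shiftA (addrC m l) !(comp_polyD, comp_polyX, comp_polyC);
    try rewrite -mul_polyC;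
    rewrite ?(polyCD, polyCM, polyCN); ring ].

Lemma EL_EL_bracket f l m x :
  EL a g D f l (EL a g D f m x) - EL a g D f m (EL a g D f l x)
    - (l - m) *: EL a g D f (l + m) x = (x.2.[g + l + m] * cocycleLL f l m, 0).
Proof. by move: x; bracket_components cocycleLL l m. Qed.

Lemma EL_EN_bracket f k l m x :
  EL a g D f l (EN b g k m x) - EN b g k m (EL a g D f l x)
    - (- m) *: EN b g k (l + m) x = (x.2.[g + l + m] * cocycleLN f k l m, 0).
Proof. by move: x; bracket_components cocycleLN l m. Qed.

Lemma EN_EL_bracket f k l m x :
  EN b g k l (EL a g D f m x) - EL a g D f m (EN b g k l x)
    - l *: EN b g k (l + m) x = (x.2.[g + l + m] * - cocycleLN f k m l, 0).
Proof. by move: x; bracket_components cocycleLN l m. Qed.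

Lemma EN_EN_bracket k l m x :
  EN b g k l (EN b g k m x) - EN b g k m (EN b g k l x)
    = (x.2.[g + l + m] * cocycleNN k l m, 0).
Proof. by move: x; bracket_components cocycleNN l m. Qed.

(* No separate N_λ L_μ condition: it is the L_μ N_λ one with λ, μ swapped. *)
Definition is_cocycle f k := [/\ forall l m, cocycleLL f l m = 0,
  forall l m, cocycleLN f k l m = 0 & forall l m, cocycleNN k l m = 0].

Lemma Ed_lin : lin_map (Ed g).
Proof.
move=> c [u1 p1] [u2 p2]; apply: injective_projections => /=.
  by rewrite !scale_regularE; ring.
by rewrite mulrDr scalerAr.
Qed.

Lemma EL_lin f l : lin_map (EL a g D f l).
Proof.
move=> c [u1 p1] [u2 p2]; apply: injective_projections => /=.
  by rewrite !scale_regularE hornerD hornerZ; ring.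
by rewrite comp_polyD comp_polyZ mulrDl scalerAl.
Qed.

Lemma EN_lin k l : lin_map (EN b g k l).
Proof.
move=> c [u1 p1] [u2 p2]; apply: injective_projections => /=.
  by rewrite !scale_regularE hornerD hornerZ; ring.
by rewrite comp_polyD comp_polyZ mulrDl scalerAl.
Qed.

Lemma Ed_EL f l x : Ed g (EL a g D f l x) - EL a g D f l (Ed g x) = - l *: EL a g D f l x.
Proof.
case: x => u p; apply: injective_projections => /=.
  by rewrite !scale_regularE hornerM hornerX; ring.
by rewrite comp_polyM comp_polyX -mul_polyC polyCN; ring.
Qed.

Lemma Ed_EN k l x : Ed g (EN b g k l x) - EN b g k l (Ed g x) = - l *: EN b g k l x.
Proof.
case: x => u p; apply: injective_projections => /=.
  by rewrite !scale_regularE hornerM hornerX; ring.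
by rewrite comp_polyM comp_polyX -mul_polyC polyCN; ring.
Qed.

Lemma polyfun_EL f x : polyfun (fun l => EL a g D f l x).
Proof.
case: x => u p; apply: polyfun_pair.
  apply: (eq_polyfun _ (polyfun_horner ((p \Po ('X + g%:P)) * f))) => l.
  by rewrite hornerM horner_comp_shift addrC.
have := polyfunD (polyfun_linear (mulr_is_linear ('X + a%:P)) (polyfun_comp_shift p))
  (polyfunZ (polyfun_linear (mulr_is_linear D%:P) (polyfun_comp_shift p))).
apply: eq_polyfun => l /=.
by rewrite -mul_polyC polyCD polyCM; ring.
Qed.

Lemma polyfun_EN k x : polyfun (fun l => EN b g k l x).
Proof.
case: x => u p; apply: polyfun_pair.
  apply: (eq_polyfun _ (polyfun_horner ((p \Po ('X + g%:P)) * k))) => l.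
  by rewrite hornerM horner_comp_shift addrC.
exact: polyfun_linear (mulr_is_linear b%:P) (polyfun_comp_shift p).
Qed.

Lemma HVextP f k : HVext a b g D f k <-> is_cocycle f k.
Proof.
have vanishes_on_v y c : 0 = ((1%:P : {poly C}).[y] * c, 0) :> Ecar -> c = 0.
  by move/(congr1 fst) => /=; rewrite hornerC mul1r.
split.
  case=> _ _ _ [HLL HLN _ HNN]; split=> l m.
  - by apply: (vanishes_on_v (g + l + m)); rewrite -(EL_EL_bracket f l m (0, 1%:P)) HLL subrr.
  - by apply: (vanishes_on_v (g + l + m)); rewrite -(EL_EN_bracket f k l m (0, 1%:P)) HLN subrr.
  - by apply: (vanishes_on_v (g + l + m)); rewrite -(EN_EN_bracket k l m (0, 1%:P)) HNN.
case=> HLL HLN HNN; split.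
- by split; [exact: Ed_lin | split=> l; [exact: EL_lin | exact: EN_lin]].
- by split=> x; [exact: polyfun_EL | exact: polyfun_EN].
- by split=> l x; [exact: Ed_EL | exact: Ed_EN].
- split=> l m x; apply/eqP; rewrite -subr_eq0 ?subr0; apply/eqP.
  + by rewrite EL_EL_bracket HLL mulr0.
  + by rewrite EL_EN_bracket HLN mulr0.
  + by rewrite EN_EL_bracket HLN oppr0 mulr0.
  + by rewrite EN_EN_bracket HNN mulr0.
Qed.

Definition coboundary f k :=
  exists c : C, f = c *: (D *: 'X + (a + g)%:P) /\ k = (c * b)%:P.

Definition shear c x : Ecar := (x.1 + c * x.2.[g], x.2).

Lemma shear_lin c : lin_map (shear c).
Proof.
move=> e [u1 p1] [u2 p2]; apply: injective_projections => //=.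
by rewrite !scale_regularE hornerD hornerZ; ring.
Qed.

Lemma shear_Ed c x : shear c (Ed g x) = Ed g (shear c x).
Proof.
case: x => u p; apply: injective_projections => //=.
by rewrite hornerM hornerX; ring.
Qed.

Lemma shear_EL c f l x :
  shear c (EL a g D f l x) = EL a g D (f + c *: (D *: 'X + (a + g)%:P)) l (shear c x).
Proof.
case: x => u p; apply: injective_projections => //=.
rewrite !(hornerM, hornerD, hornerZ, hornerX, hornerC, horner_comp_shift); ring.
Qed.

Lemma shear_EN c k l x :
  shear c (EN b g k l x) = EN b g (k + (c * b)%:P) l (shear c x).
Proof.
case: x => u p; apply: injective_projections => //=.
rewrite !(hornerM, hornerD, hornerC, horner_comp_shift); ring.
Qed.

Lemma equiv_map_shear (phi : Ecar -> Ecar) :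
  lin_map phi -> (forall x, phi (Ed g x) = Ed g (phi x)) ->
  (forall u : C, phi (u, 0) = (u, 0)) -> (forall x, (phi x).2 = x.2) ->
  exists c, phi =1 shear c.
Proof.
move=> phi_lin phi_d phi_c phi_2; exists (phi (0, 1)).1 => -[u p].
have phi_vec q : (phi (0, q)).1 = q.[g] * (phi (0, 1)).1.
  elim/poly_ind: q => [|q e IHq]; first by rewrite phi_c horner0 mul0r.
  have -> : ((0, q * 'X + e%:P) : Ecar) = Ed g (0, q) + e *: (0, 1).
    apply: injective_projections => /=; first by rewrite mulr0 scale_regularE !mulr0 addr0.
    by rewrite mulrC -mul_polyC mulr1.
  rewrite linear_mapD // linear_mapZ // phi_d /= IHq hornerMXaddC scale_regularE; ring.
have -> : ((u, p) : Ecar) = (u, 0) + (0, p).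
  by apply: injective_projections => /=; rewrite ?addr0 ?add0r.
rewrite linear_mapD // phi_c; apply: injective_projections => /=.
  by rewrite phi_vec add0r addr0 mulrC.
by rewrite phi_2 !add0r.
Qed.

Lemma HVext_equivP f k f' k' : HVext_equiv a b g D f k f' k' <->
  exists c, f' = f + c *: (D *: 'X + (a + g)%:P) /\ k' = k + (c * b)%:P.
Proof.
split=> [[phi [[phi_lin phi_d] phi_L phi_N phi_c phi_2]] | [c [-> ->]]]; last first.
  by exists (shear c); split=> //; [split; [exact: shear_lin | exact: shear_Ed]
    | exact: shear_EL | exact: shear_EN | move=> u; rewrite /shear horner0 mulr0 addr0].
have [c phiE] := equiv_map_shear phi_lin phi_d phi_c phi_2.
exists c; split; apply: poly_eq_on_nonzero => l _.
  have := congr1 fst (phi_L l (0, 1)).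
  by rewrite !phiE shear_EL /= !hornerC !mul1r.
have := congr1 fst (phi_N l (0, 1)).
by rewrite !phiE shear_EN /= !hornerC !mul1r.
Qed.

Lemma HVext_trivialP f k : HVext_trivial a b g D f k <-> coboundary f k.
Proof.
rewrite /HVext_trivial HVext_equivP.
split=> [[c [f0 k0]] | [c [-> ->]]]; exists (- c); last first.
  by rewrite scaleNr mulNr polyCN !subrr.
rewrite scaleNr mulNr polyCN.
by split; apply/eqP; rewrite -addr_eq0 eq_sym; apply/eqP.
Qed.

Lemma coboundary_of_b_neq0 f k : b != 0 -> is_cocycle f k -> coboundary f k.
Proof.
move=> b0 [_ HLN HNN].
have k_cst l : k.[l] = k.[0].
  by have /eqP := HNN l 0; rewrite /cocycleNN -mulrBr mulf_eq0 (negbTE b0) subr_eq0 => /eqP.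
exists (k.[0] / b); split; apply: poly_eq_on_nonzero => l _; last first.
  by rewrite hornerC divfK // k_cst.
rewrite !(hornerZ, hornerD, hornerX, hornerC); apply: (mulfI b0).
rewrite mulrA mulrCA divff // mulr1; apply: subr0_eq.
by rewrite -[X in _ = X](HLN l 0) /cocycleLN addr0 k_cst; ring.
Qed.

Lemma cocycle_k_scaleX f k : b = 0 -> D != 0 -> is_cocycle f k ->
  exists2 kap, k = kap *: 'X & (kap != 0 -> a + g = 0 /\ D = 1).
Proof.
move=> b0 D0 [_ HLN _].
have LN l m : (a + g + m + D * l) * k.[m] = m * k.[l + m].
  by apply/esym/subr0_eq; rewrite -[X in _ = X](HLN l m) /cocycleLN b0; ring.
have k0 : k.[0] = 0.
  have := LN ((1 - (a + g)) / D) 0.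
  by rewrite mul0r addr0 -mulrCA divff // mulr1 addrCA subrr addr0 mul1r.
have k_aff l : k.[l] = (a + g + 1 + D * (l - 1)) * k.[1].
  by rewrite LN mul1r subrK.
have k1D : (a + g + 1 - D) * k.[1] = 0.
  by rewrite -k0 (k_aff 0); ring.
have k_lin l : k.[l] = D * k.[1] * l.
  by apply: subr0_eq; rewrite -[X in _ = X]k1D k_aff; ring.
exists (D * k.[1]).
  by apply: poly_eq_on_nonzero => l _; rewrite (k_lin l) hornerZ hornerX.
rewrite mulf_eq0 negb_or => /andP [_ k1].
have ag0 : a + g = 0.
  apply: (mulIf k1); rewrite mul0r.
  transitivity ((a + g + 1 + D * 0) * k.[1] - k.[1]); first ring.
  by rewrite (LN 0 1) add0r mul1r subrr.
split=> //; move: k1D; rewrite ag0 add0r => /eqP.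
by rewrite mulf_eq0 (negbTE k1) orbF subr_eq0 eq_sym => /eqP.
Qed.

Lemma cocycle_f_ag_neq0 f k : a + g != 0 -> is_cocycle f k ->
  f = (f.[0] / (a + g)) *: (D *: 'X + (a + g)%:P).
Proof.
move=> ag0 [HLL _ _]; apply: poly_eq_on_nonzero => l _.
rewrite !(hornerZ, hornerD, hornerX, hornerC); apply: (mulfI ag0).
rewrite mulrA mulrCA divff // mulr1; apply: subr0_eq.
by rewrite -[X in _ = X](HLL l 0) /cocycleLL !(mulr0, addr0, subr0); ring.
Qed.

(* For a + g = 0: cocycleLL 'X^i l (t * l) = l ^+ i.+1 * (monomial_defect i).[t]. *)
Definition monomial_defect (i : nat) : {poly C} :=
  1 + D *: 'X - ('X + D%:P) * 'X^i - (1 - 'X) * ('X + 1) ^+ i.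

Lemma horner_monomial_defect i t : (monomial_defect i).[t] =
  1 + D * t - (t + D) * t ^+ i - (1 - t) * (t + 1) ^+ i.
Proof. by rewrite /monomial_defect !hornerE. Qed.

Lemma cocycle_coef_defect f k : a + g = 0 -> is_cocycle f k ->
  forall i t, f`_i * (monomial_defect i).[t] = 0.
Proof.
move=> ag0 [HLL _ _] i t.
pose Q := \poly_(j < size f) (f`_j * (monomial_defect j).[t]).
have Q0 : Q = 0.
  apply: poly_eq0_on_nonzero => l l0; apply: (mulfI l0).
  rewrite mulr0 -[RHS](HLL l (t * l)) /cocycleLL ag0.
  rewrite (horner_coef_wide _ (size_poly _ _)) !horner_coef.
  have -> : l + t * l = (t + 1) * l by ring.
  rewrite !mulr_sumr -!sumrB; apply: eq_bigr => j _.
  by rewrite coef_poly ltn_ord horner_monomial_defect !exprMn; ring.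
have := congr1 (fun p : {poly C} => p`_i) Q0; rewrite /= coef0 coef_poly.
by case: ltnP => // /(nth_default 0) ->; rewrite mul0r.
Qed.

Lemma monomial_defect_eq0 i : D != 0 -> (forall t, (monomial_defect i).[t] = 0) ->
  i = 1%N \/ (i = 2%N /\ D = 1) \/ (i = 3%N /\ D = 2).
Proof.
move=> D0 G0; case: i G0 => [|[|[|[|i]]]] G0; first 2 [by left].
- have : - D = 0 by rewrite -(G0 0) horner_monomial_defect; ring.
  by move/eqP; rewrite oppr_eq0 (negbTE D0).
- right; left; split=> //.
  have : 2 * (1 - D) = 0 by rewrite -(G0 2) horner_monomial_defect; ring.
  by move/eqP; rewrite mulf_eq0 pnatr_eq0 /= subr_eq0 => /eqP <-.
- right; right; split=> //.
  have : 6 * (2 - D) = 0 by rewrite -(G0 2) horner_monomial_defect; ring.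
  by move/eqP; rewrite mulf_eq0 pnatr_eq0 /= subr_eq0 => /eqP <-.
have := congr1 (fun p : {poly C} => p`_2) (poly_eq0_on_nonzero (fun t _ => G0 t)).
rewrite /= coef0 /monomial_defect mulrBl mul1r !coefB coefD coef1 coefZ coefX.
rewrite coefMXn coefXM /= !coef_Xadd1_exp.
rewrite mulr0 !subr0 add0r sub0r => /eqP.
by rewrite oppr_eq0 subr_eq0 eqr_nat !binS !bin1 !bin0 => /eqP; lia.
Qed.

Lemma cocycle_coef_support f k : a + g = 0 -> D != 0 -> is_cocycle f k ->
  forall i, f`_i != 0 -> i = 1%N \/ (i = 2%N /\ D = 1) \/ (i = 3%N /\ D = 2).
Proof.
move=> ag0 D0 cfk i fi; apply: monomial_defect_eq0 => // t.
by have /eqP := cocycle_coef_defect ag0 cfk i t; rewrite mulf_eq0 (negbTE fi) => /eqP.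
Qed.

Lemma coboundary_of_cocycle f k : (D, b) != (0, 0) -> is_cocycle f k ->
  ~ [/\ a + g = 0, b = 0 & (D = 1 \/ D = 2)] -> coboundary f k.
Proof.
move=> Db cfk exceptional.
have [b0 | b0] := eqVneq b 0; last exact: coboundary_of_b_neq0.
have D0 : D != 0 by move: Db; rewrite b0 xpair_eqE eqxx andbT.
have [kap k_def kap_exc] := cocycle_k_scaleX b0 D0 cfk.
have [ag0 | ag0] := eqVneq (a + g) 0; last first.
  exists (f.[0] / (a + g)); split; first exact: cocycle_f_ag_neq0 ag0 cfk.
  have kap0 : kap = 0 by apply/eqP; apply: contraNT ag0 => /kap_exc [-> _].
  by rewrite k_def kap0 scale0r b0 mulr0.
have [D1 D2] : D != 1 /\ D != 2 by split; apply/eqP => DE; apply: exceptional; split; auto.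
have kap0 : kap = 0 by apply/eqP; apply: contraNT D1 => /kap_exc [_ ->].
exists (f`_1 / D); split; last by rewrite k_def kap0 scale0r b0 mulr0.
have supp i : f`_i != 0 -> i = 1%N.
  by move/(cocycle_coef_support ag0 D0 cfk) => [// | [[_ DE] | [_ DE]]]; rewrite DE eqxx in D1 D2.
by rewrite ag0 addr0 scalerA divfK // {1}(poly_X supp).
Qed.

Lemma HVext_equiv_ag0_b0 f k f' k' : a + g = 0 -> b = 0 ->
  HVext_equiv a b g D f k f' k' <-> exists c, f' = f + (c * D) *: 'X /\ k' = k.
Proof.
move=> ag0 b0; rewrite HVext_equivP ag0 b0.
by split=> -[c [-> ->]]; exists c; rewrite addr0 scalerA mulr0 addr0.
Qed.

Lemma HVext_equiv_drop_X f k : a + g = 0 -> b = 0 -> D != 0 ->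
  HVext_equiv a b g D f k (f - f`_1 *: 'X) k.
Proof.
move=> ag0 b0 D0; apply/HVext_equiv_ag0_b0 => //.
by exists (- f`_1 / D); rewrite divfK // scaleNr.
Qed.

Lemma HVext_equiv_coef f k f' k' : a + g = 0 -> b = 0 ->
  HVext_equiv a b g D f k f' k' -> k' = k /\ forall i, i != 1%N -> f'`_i = f`_i.
Proof.
move=> ag0 b0 /HVext_equiv_ag0_b0 [] // c [-> ->]; split=> // i i1.
by rewrite coefD coefZ coefX (negbTE i1) mulr0 addr0.
Qed.

Lemma classification_D1 : a + g = 0 -> b = 0 -> D = 1 ->
  [/\ forall k1 f2 : C, (k1, f2) != (0, 0) ->
        HVext a b g D (f2 *: 'X^2) (k1 *: 'X)
        /\ ~ HVext_trivial a b g D (f2 *: 'X^2) (k1 *: 'X),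
      forall f k, HVext a b g D f k -> ~ HVext_trivial a b g D f k ->
        exists k1 f2 : C, (k1, f2) != (0, 0) /\
          HVext_equiv a b g D f k (f2 *: 'X^2) (k1 *: 'X) &
      forall k1 f2 k1' f2' : C,
        HVext_equiv a b g D (f2 *: 'X^2) (k1 *: 'X) (f2' *: 'X^2) (k1' *: 'X) ->
        k1 = k1' /\ f2 = f2'].
Proof.
move=> ag0 b0 D1; have D0 : D != 0 by rewrite D1 oner_eq0.
have uniq (k1 f2 k1' f2' : C) :
    HVext_equiv a b g D (f2 *: 'X^2) (k1 *: 'X) (f2' *: 'X^2) (k1' *: 'X) ->
    k1 = k1' /\ f2 = f2'.
  move=> /(HVext_equiv_coef ag0 b0) [k_eq f_eq]; split.
    by have := congr1 (fun p : {poly C} => p`_1) k_eq; rewrite /= !coefZ coefX /= !mulr1 => ->.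
  by have := f_eq 2%N isT; rewrite !coefZ coefXn /= !mulr1 => ->.
split=> // [k1 f2 nz | f k /HVextP cfk nontriv].
  split.
    apply/HVextP; split=> l m; rewrite /cocycleLL /cocycleLN /cocycleNN ?ag0 ?b0 ?D1;
      rewrite !(hornerZ, hornerXn, hornerX); ring.
  have -> : HVext_trivial a b g D (f2 *: 'X^2) (k1 *: 'X) =
    HVext_equiv a b g D (f2 *: 'X^2) (k1 *: 'X) (0 *: 'X^2) (0 *: 'X) by rewrite !scale0r.
  by move=> /uniq [k1_0 f2_0]; move: nz; rewrite k1_0 f2_0 eqxx.
have [kap k_def _] := cocycle_k_scaleX b0 D0 cfk.
have supp i : f`_i != 0 -> i = 1%N \/ i = 2%N.
  move/(cocycle_coef_support ag0 D0 cfk) => [-> | [[-> _] | [_ DE]]]; [by left | by right |].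
  by move/eqP: DE; rewrite D1 eq_sym pnatr_eq1.
have f_red : f - f`_1 *: 'X = f`_2 *: 'X^2.
  by rewrite {1}(poly_X_Xn _ supp) // addrAC subrr add0r.
have equiv_red := HVext_equiv_drop_X f k ag0 b0 D0.
rewrite f_red {2}k_def in equiv_red.
exists kap, f`_2; split=> //.
apply/negP; rewrite xpair_eqE => /andP [/eqP kap0 /eqP f2_0]; apply: nontriv.
by move: equiv_red; rewrite kap0 f2_0 !scale0r.
Qed.

Lemma classification_D2 : a + g = 0 -> b = 0 -> D = 2 ->
  [/\ forall f3 : C, f3 != 0 ->
        HVext a b g D (f3 *: 'X^3) 0 /\ ~ HVext_trivial a b g D (f3 *: 'X^3) 0,
      forall f k, HVext a b g D f k -> ~ HVext_trivial a b g D f k ->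
        exists f3 : C, f3 != 0 /\ HVext_equiv a b g D f k (f3 *: 'X^3) 0 &
      forall f3 f3' : C,
        HVext_equiv a b g D (f3 *: 'X^3) 0 (f3' *: 'X^3) 0 -> f3 = f3'].
Proof.
move=> ag0 b0 D2; have D0 : D != 0 by rewrite D2 pnatr_eq0.
have D1 : D != 1 by rewrite D2 pnatr_eq1.
have uniq (f3 f3' : C) :
    HVext_equiv a b g D (f3 *: 'X^3) 0 (f3' *: 'X^3) 0 -> f3 = f3'.
  move=> /(HVext_equiv_coef ag0 b0) [_ f_eq].
  by have := f_eq 3%N isT; rewrite !coefZ coefXn /= !mulr1 => ->.
split=> // [f3 nz | f k /HVextP cfk nontriv].
  split.
    apply/HVextP; split=> l m; rewrite /cocycleLL /cocycleLN /cocycleNN ?ag0 ?b0 ?D2;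
      rewrite !(hornerZ, hornerXn, hornerX, horner0); ring.
  have -> : HVext_trivial a b g D (f3 *: 'X^3) 0 =
    HVext_equiv a b g D (f3 *: 'X^3) 0 (0 *: 'X^3) 0 by rewrite scale0r.
  by move=> /uniq f3_0; move: nz; rewrite f3_0 eqxx.
have k0 : k = 0.
  have [kap -> kap_exc] := cocycle_k_scaleX b0 D0 cfk.
  suff -> : kap = 0 by rewrite scale0r.
  by apply: contraTeq isT => /kap_exc [_ DE]; rewrite DE eqxx in D1.
have supp i : f`_i != 0 -> i = 1%N \/ i = 3%N.
  move/(cocycle_coef_support ag0 D0 cfk) => [-> | [[_ DE] | [-> _]]]; [by left | | by right].
  by rewrite DE eqxx in D1.
have f_red : f - f`_1 *: 'X = f`_3 *: 'X^3.
  by rewrite {1}(poly_X_Xn _ supp) // addrAC subrr add0r.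
have equiv_red := HVext_equiv_drop_X f k ag0 b0 D0.
rewrite f_red {2}k0 in equiv_red.
exists f`_3; split=> //.
by apply/negP => /eqP f3_0; apply: nontriv; move: equiv_red; rewrite f3_0 scale0r.
Qed.

Lemma HVext_nontrivial_iff : (D, b) != (0, 0) ->
  (exists f k, HVext a b g D f k /\ ~ HVext_trivial a b g D f k)
    <-> [/\ a + g = 0, b = 0 & (D = 1 \/ D = 2)].
Proof.
move=> Db; split=> [[f [k [/HVextP cfk nontriv]]] | [ag0 b0 [D1 | D2]]].
- case: (boolP [&& a + g == 0, b == 0 & (D == 1) || (D == 2)]).
    by case/and3P => /eqP ag0 /eqP b0 /orP D12; split=> //; case: D12 => /eqP; auto.
  move=> exc; exfalso; apply/nontriv/HVext_trivialP/(coboundary_of_cocycle Db cfk).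
  by case=> ag0 b0 D12; move: exc; rewrite ag0 b0 !eqxx; case: D12 => ->; rewrite eqxx ?orbT.
- have [normal_forms _ _] := classification_D1 ag0 b0 D1.
  exists (1 *: 'X^2), (0 *: 'X); apply: normal_forms.
  by rewrite xpair_eqE oner_eq0 andbF.
- have [normal_forms _ _] := classification_D2 ag0 b0 D2.
  by exists (1 *: 'X^3), 0; apply/normal_forms/oner_neq0.
Qed.

End HVExtensions.

Local Open Scope complex_scope.

Theorem corollary6p1 (R : realType) (a b g D : R[i]) (hDb : (D, b) != (0, 0)) :
  [/\ (exists f k : {poly R[i]}, HVext a b g D f k /\ ~ HVext_trivial a b g D f k)
        <-> [/\ a + g = 0, b = 0 & (D = 1 \/ D = 2)],
      (forall f k : {poly R[i]}, HVext_trivial a b g D f k <->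
         exists c : R[i], f = c *: (D *: 'X + (a + g)%:P) /\ k = (c * b)%:P),
      (a + g = 0 -> b = 0 -> D = 1 ->
        [/\ forall k1 f2 : R[i], (k1, f2) != (0, 0) ->
              HVext a b g D (f2 *: 'X^2) (k1 *: 'X)
              /\ ~ HVext_trivial a b g D (f2 *: 'X^2) (k1 *: 'X),
            forall f k : {poly R[i]}, HVext a b g D f k -> ~ HVext_trivial a b g D f k ->
              exists k1 f2 : R[i], (k1, f2) != (0, 0) /\
                HVext_equiv a b g D f k (f2 *: 'X^2) (k1 *: 'X) &
            forall k1 f2 k1' f2' : R[i],
              HVext_equiv a b g D (f2 *: 'X^2) (k1 *: 'X) (f2' *: 'X^2) (k1' *: 'X) ->
              k1 = k1' /\ f2 = f2']) &
      (a + g = 0 -> b = 0 -> D = 2 ->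
        [/\ forall f3 : R[i], f3 != 0 ->
              HVext a b g D (f3 *: 'X^3) 0 /\ ~ HVext_trivial a b g D (f3 *: 'X^3) 0,
            forall f k : {poly R[i]}, HVext a b g D f k -> ~ HVext_trivial a b g D f k ->
              exists f3 : R[i], f3 != 0 /\ HVext_equiv a b g D f k (f3 *: 'X^3) 0 &
            forall f3 f3' : R[i],
              HVext_equiv a b g D (f3 *: 'X^3) 0 (f3' *: 'X^3) 0 -> f3 = f3'])].
Proof.
split; [exact: HVext_nontrivial_iff | exact: HVext_trivialP
  | exact: classification_D1 | exact: classification_D2].
Qed.
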